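(* Let $m,n\geq2$ and let $\mathbf p\in\mathbb R^m$, $\mathbf q\in\mathbb R^n$ be probability vectors with all entries strictly positive. If $P\in\mathcal C(\mathbf p,\mathbf q)$ is local optimal, then $m+n-\kappa(\mathbf p,\mathbf q)\leq|V(P)|\leq m+n-1$.
   Context: $\mathcal C(\mathbf p,\mathbf q)$: nonnegative $m\times n$ matrices $P=(p_{i,j})$ with row sums $p_i$, column sums $q_j$. $V(P)=\{(i,j):p_{i,j}\neq0\}$. $H(A)=-\sum a_{i,j}\log a_{i,j}$ ($0\log0=0$). Structure constant: for $\sigma\in\Sigma_m$ let $F_{\sigma\mathbf p}(i)=\sum_{k\le i}p_{\sigma(k)}$; $\kappa(\mathbf p,\mathbf q)=\max_{(\sigma,\pi)\in\Sigma_m\times\Sigma_n}|\{F_{\sigma\mathbf p}(i):1\le i<m\}\cap\{F_{\pi\mathbf q}(j):1\le j<n\}|+1$. Moves on $P$ (each yields $P'\in\mathcal C(\mathbf p,\mathbf q)$ by replacing the chosen submatrix $A$ by $A'$): (M1) choose distinct rows $i_1,i_2$ and distinct columns $j_1,j_2$, $a_{s,t}=p_{i_s,j_t}$; if $\max(a_{1,1},a_{2,2})\ge\max(a_{1,2},a_{2,1})$, put $b=\min(a_{1,2},a_{2,1})$, $a'_{s,s}=a_{s,s}+b$, $a'_{1,2}=a_{1,2}-b$, $a'_{2,1}=a_{2,1}-b$. (M2) same replacement, allowed when $a_{1,1}+a_{1,2}\ge a_{2,1}+a_{2,2}$, $a_{1,1}+a_{2,1}\ge a_{1,2}+a_{2,2}$,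 $a_{1,2}\ge a_{2,1}$. (M3) distinct rows $i_1,i_2$, distinct columns $j_1,\dots,j_r$ ($r\ge2$), $a_{s,k}=p_{i_s,j_k}$, allowed when $a_{2,k}=0$ for $k\ge2$ and $\sum_{k\ge2}a_{1,k}\le a_{2,1}\le\sum_{k\ge1}a_{1,k}$; replace by $a'_{1,1}=\sum_ka_{1,k}$, $a'_{1,k}=0$, $a'_{2,1}=a_{2,1}-\sum_{k\ge2}a_{1,k}$, $a'_{2,k}=a_{1,k}$ ($k\ge2$); moves may also be applied with rows and columns exchanged. $P$ is local optimal if no such move produces $P'$ with $H(P')<H(P)$. *)

From HB Require Import structures.
From mathcomp Require Import all_boot all_order all_algebra all_fingroup.
From mathcomp Require Import reals exp.
Set Implicit Arguments. Unset Strict Implicit. Unset Printing Implicit Defensive.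
Import Order.TTheory GRing.Theory Num.Theory.
Local Open Scope ring_scope.

Section Defs.
Variable R : realType.

Definition pos_prob_vec (k : nat) (p : 'I_k -> R) : Prop :=
  (forall i, 0 < p i) /\ \sum_(i < k) p i = 1.

Definition coupling (m n : nat) (p : 'I_m -> R) (q : 'I_n -> R)
  (P : 'M[R]_(m, n)) : Prop :=
  (forall i j, 0 <= P i j) /\
  (forall i, \sum_(j < n) P i j = p i) /\
  (forall j, \sum_(i < m) P i j = q j).

Definition supp (m n : nat) (P : 'M[R]_(m, n)) : {set 'I_m * 'I_n} :=
  [set ij | P ij.1 ij.2 != 0].

Definition xlnx (x : R) : R := if x == 0 then 0 else x * ln x.

Definition entropy (m n : nat) (A : 'M[R]_(m, n)) : R :=
  - \sum_(i < m) \sum_(j < n) xlnx (A i j).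

(* partial sums F_{sigma p}(i) = sum_{k <= i} p_{sigma(k)}, 1 <= i < m
   (0-indexed: sum over k < i for i = 1..m-1) *)
Definition partial_sums (m : nat) (p : 'I_m -> R) (s : 'S_m) : seq R :=
  [seq \sum_(k < m | (k < i)%N) p (s k) | i <- iota 1 m.-1].

Definition kappa (m n : nat) (p : 'I_m -> R) (q : 'I_n -> R) : nat :=
  (\max_(s : 'S_m) \max_(t : 'S_n)
     size (undup [seq x <- partial_sums p s | x \in partial_sums q t]))%N + 1.

Definition move2x2 (m n : nat) (P : 'M[R]_(m, n)) (i1 i2 : 'I_m) (j1 j2 : 'I_n)
  : 'M[R]_(m, n) :=
  let b := Num.min (P i1 j2) (P i2 j1) in
  \matrix_(i, j)
    if (i == i1) && (j == j1) then P i j + b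
    else if (i == i2) && (j == j2) then P i j + b
    else if (i == i1) && (j == j2) then P i j - b
    else if (i == i2) && (j == j1) then P i j - b
    else P i j.

Definition moveM1 (m n : nat) (P P' : 'M[R]_(m, n)) : Prop :=
  exists (i1 i2 : 'I_m) (j1 j2 : 'I_n), i1 != i2 /\ j1 != j2 /\
    Num.max (P i1 j2) (P i2 j1) <= Num.max (P i1 j1) (P i2 j2) /\
    P' = move2x2 P i1 i2 j1 j2.

Definition moveM2 (m n : nat) (P P' : 'M[R]_(m, n)) : Prop :=
  exists (i1 i2 : 'I_m) (j1 j2 : 'I_n), i1 != i2 /\ j1 != j2 /\
    P i2 j1 + P i2 j2 <= P i1 j1 + P i1 j2 /\
    P i1 j2 + P i2 j2 <= P i1 j1 + P i2 j1 /\
    P i2 j1 <= P i1 j2 /\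
    P' = move2x2 P i1 i2 j1 j2.

(* move (M3): rows i1,i2, columns J 0 (= j_1), J 1, ..., J r.+1 (r+2 >= 2) *)
Definition moveM3 (m n : nat) (P P' : 'M[R]_(m, n)) : Prop :=
  exists (i1 i2 : 'I_m) (r : nat) (J : 'I_r.+2 -> 'I_n),
    i1 != i2 /\ injective J /\
    (forall k : 'I_r.+2, k != ord0 -> P i2 (J k) = 0) /\
    let S1 := \sum_(k < r.+2) P i1 (J k) in
    let S2 := \sum_(k < r.+2 | k != ord0) P i1 (J k) in
    S2 <= P i2 (J ord0) /\ P i2 (J ord0) <= S1 /\
    P' = \matrix_(i, j)
           if i == i1 then
             (if j == J ord0 then S1
              else if j \in codom J then 0 else P i j)
           else if i == i2 then
             (if j == J ord0 then P i2 (J ord0) - S2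
              else if j \in codom J then P i1 j else P i j)
           else P i j.

Definition move_rows (m n : nat) (P P' : 'M[R]_(m, n)) : Prop :=
  moveM1 P P' \/ moveM2 P P' \/ moveM3 P P'.

Definition move (m n : nat) (P P' : 'M[R]_(m, n)) : Prop :=
  move_rows P P' \/ move_rows P^T P'^T.

Definition local_optimal (m n : nat) (P : 'M[R]_(m, n)) : Prop :=
  forall P' : 'M[R]_(m, n), move P P' -> ~ (entropy P' < entropy P).

End Defs.

From HB Require Import structures.
From mathcomp Require Import all_boot all_order all_algebra all_fingroup.
From mathcomp Require Import reals exp.
From mathcomp Require Import lra zify.
Import Order.TTheory GRing.Theory Num.Theory.
Local Open Scope ring_scope.

(* If an entry of V(P) is at least as large as some other entry of V(P) in its
   row and some other entry of V(P) in its column, the (M1) move on the 2x2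
   block they span strictly lowers the entropy, by convexity of x log x.  So in
   a local optimum the largest entry of V(P) is alone in its row or in its
   column; deleting it and inducting gives |V(P)| < (number of rows met by V(P))
   + (number of columns met by V(P)) <= m + n.

   For the lower bound, V(P) is the edge set of a bipartite graph on the rows
   and columns, which has c >= m + n - |V(P)| connected components.  As p and q
   are positive, every component contains rows and columns, and it carries the
   same p-mass as q-mass.  Listing rows and columns component by component, the
   masses of the first K components, 0 < K < c, are c - 1 distinct common
   partial sums of p and of q, whence c <= kappa(p, q). *)

Section XLogX.
Variable R : realType.
Implicit Types a c t u v w x y z : R.

Lemma ln_lt_subr1 x : 0 < x -> x != 1 -> ln x < x - 1.
Proof.
move=> x0 x1; rewrite -ltr_expR lnK ?posrE //.
by have := @expR_gt1Dx R (x - 1); rewrite subr_eq0 addrC subrK; apply.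
Qed.

Lemma mul_lnB_lt {u v} : 0 < u -> 0 < v -> u != v -> v * (ln u - ln v) < u - v.
Proof.
move=> u0 v0 uv; have v_neq0 := lt0r_neq0 v0.
have -> : u - v = v * (u / v - 1) by rewrite mulrBr mulr1 mulrCA divff ?mulr1.
rewrite -ln_div ?posrE // ltr_pM2l //; apply: ln_lt_subr1; first exact: divr_gt0.
by apply: contra uv => /eqP uv1; rewrite -[u](divfK v_neq0) uv1 mul1r.
Qed.

Lemma mul_lnB_le {u v} : 0 < u -> 0 < v -> v * (ln u - ln v) <= u - v.
Proof.
move=> u0 v0; have [->|uv] := eqVneq u v; first by rewrite !subrr mulr0.
exact/ltW/mul_lnB_lt.
Qed.

Lemma xlnx0 : xlnx (0 : R) = 0.
Proof. by rewrite /xlnx eqxx. Qed.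

Lemma xlnxE x : 0 < x -> xlnx x = x * ln x.
Proof. by move=> x0; rewrite /xlnx gt_eqF. Qed.

Lemma xlnx_shift_lt {a c t} : 0 < t -> t <= c -> c <= a ->
  xlnx a + xlnx c < xlnx (a + t) + xlnx (c - t).
Proof.
move=> t0 tc ca; have c0 := lt_le_trans t0 tc; have a0 := lt_le_trans c0 ca.
have at0 : 0 < a + t by rewrite addr_gt0.
(* Moving [t] onto [a] gains more than [t (1 + ln a)], taking it from [c]
   loses at most [t (1 + ln c)]. *)
have gain : (a + t) * (ln a - ln (a + t)) < - t.
  by rewrite (_ : - t = a - (a + t)) ?mul_lnB_lt ?lt_eqF ?ltrDl //; lra.
have ln_ca : t * ln c <= t * ln a by rewrite ler_pM2l // ler_ln ?posrE.
rewrite (xlnxE _ a0) (xlnxE _ c0) (xlnxE _ at0).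
have [ct|ct] := eqVneq t c; first by rewrite -ct subrr xlnx0; rewrite -ct in ln_ca; nra.
have ct0 : 0 < c - t by rewrite subr_gt0 lt_neqAle ct.
have loss := mul_lnB_le c0 ct0.
rewrite xlnxE //; nra.
Qed.

Lemma xlnxD_ge {x y} : 0 <= x -> 0 <= y -> xlnx x + xlnx y <= xlnx (x + y).
Proof.
rewrite le0r => /orP[/eqP->|x0]; first by rewrite xlnx0 !add0r.
rewrite le0r => /orP[/eqP->|y0]; first by rewrite xlnx0 !addr0.
have xy0 : 0 < x + y by rewrite addr_gt0.
have lnx : ln x <= ln (x + y) by rewrite ler_ln ?posrE // lerDl ltW.
have lny : ln y <= ln (x + y) by rewrite ler_ln ?posrE // lerDr ltW.
rewrite !xlnxE //; nra.
Qed.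

Lemma xlnx_block_lt x y z w : 0 < y -> 0 < z -> 0 <= w -> y <= x -> z <= x ->
  xlnx x + xlnx w + xlnx y + xlnx z <
  xlnx (x + Num.min y z) + xlnx (w + Num.min y z) +
  xlnx (y - Num.min y z) + xlnx (z - Num.min y z).
Proof.
move=> y0 z0 w0 yx zx.
have [yz|/ltW zy] := leP y z; rewrite subrr xlnx0.
- have := xlnx_shift_lt y0 yz zx; have := xlnxD_ge w0 (ltW y0); lra.
- have := xlnx_shift_lt z0 zy yx; have := xlnxD_ge w0 (ltW z0); lra.
Qed.

End XLogX.

Lemma big_split4 {T : finType} {V : nmodType} (F : T -> V) {a b c d} :
  uniq [:: a; b; c; d] ->
  \sum_x F x = F a + F b + F c + F d + \sum_(x | x \notin [:: a; b; c; d]) F x.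
Proof.
move=> abcd; rewrite (bigID [in [:: a; b; c; d]]) /= -big_uniq //.
by rewrite !big_cons big_nil /= addr0 !addrA.
Qed.

Lemma entropy_move2x2_lt (R : realType) m n (P : 'M[R]_(m, n)) i1 i2 j1 j2 :
  i1 != i2 -> j1 != j2 -> 0 < P i1 j2 -> 0 < P i2 j1 -> 0 <= P i2 j2 ->
  P i1 j2 <= P i1 j1 -> P i2 j1 <= P i1 j1 ->
  entropy (move2x2 P i1 i2 j1 j2) < entropy P.
Proof.
move=> i12 j12 y0 z0 w0 yx zx; rewrite /entropy ltrN2 !pair_big /=.
have corners : uniq [:: (i1, j1); (i2, j2); (i1, j2); (i2, j1)].
  by rewrite /= !inE !xpair_eqE !negb_or !negb_and i12 j12 eq_sym i12 eq_sym j12 !orbT.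
rewrite !(big_split4 _ corners).
have -> : \sum_(e | e \notin [:: (i1, j1); (i2, j2); (i1, j2); (i2, j1)])
            xlnx (move2x2 P i1 i2 j1 j2 e.1 e.2) =
          \sum_(e | e \notin [:: (i1, j1); (i2, j2); (i1, j2); (i2, j1)]) xlnx (P e.1 e.2).
  apply: eq_bigr => -[i j]; rewrite !inE /= mxE -!xpair_eqE.
  by case/norP=> /negbTE-> /norP[/negbTE-> /norP[/negbTE-> /negbTE->]].
rewrite ltrD2r /= !mxE !eqxx (negbTE i12) (negbTE j12) eq_sym (negbTE i12) /=.
by rewrite eq_sym (negbTE j12); apply: xlnx_block_lt.
Qed.

Lemma card_imset_setD1_lt {A B : finType} (f : A -> B) {E : {set A}} {e} :
  e \in E -> {in E, forall x, f x = f e -> x = e} ->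
  (#|f @: (E :\ e)| < #|f @: E|)%N.
Proof.
move=> eE fe; rewrite [X in (_ < X)%N](cardsD1 (f e)) imset_f //= ltnS subset_leq_card //.
apply/subsetP => _ /imsetP[x /setD1P[xe xE] ->]; rewrite in_setD1 imset_f // andbT.
by apply: contra xe => /eqP/fe->.
Qed.

Section ReducibleEntries.
Context {I J : finType} {d : Order.disp_t} {T : orderType d} (w : I * J -> T).
Implicit Types (E F : {set I * J}) (e : I * J).

(* [e] can be the corner a_{1,1} of an (M1) move supported in [E]. *)
Definition reducible E e : bool :=
  [exists j, [&& j != e.2, (e.1, j) \in E & (w (e.1, j) <= w e)%O]] &&
  [exists i, [&& i != e.1, (i, e.2) \in E & (w (i, e.2) <= w e)%O]].

Lemma reducibleS E F e : E \subset F -> reducible E e -> reducible F e.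
Proof.
move=> EF /andP[/existsP[j /and3P[je jE wj]] /existsP[i /and3P[ie iE wi]]].
apply/andP; split; [apply/existsP; exists j | apply/existsP; exists i];
  by rewrite ?je ?ie ?wj ?wi (subsetP EF).
Qed.

Lemma irreducible_max_isolated {E e} :
  e \in E -> {in E, forall x, (w x <= w e)%O} -> ~~ reducible E e ->
  {in E, forall x, x.1 = e.1 -> x = e} \/ {in E, forall x, x.2 = e.2 -> x = e}.
Proof.
move=> eE emax; rewrite negb_and => /orP[/existsPn row | /existsPn col]; [left | right].
- move=> [i j] xE /= ie; rewrite [e]surjective_pairing -ie; congr pair; apply/eqP.
  by apply: contraR (row j) => je; rewrite -ie je xE emax.
- move=> [i j] xE /= je; rewrite [e]surjective_pairing -je; congr pair; apply/eqP.
  by apply: contraR (col i) => ie; rewrite -je ie xE emax.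
Qed.

Lemma card_irreducible_lt {E} : E != set0 -> {in E, forall e, ~~ reducible E e} ->
  (#|E| < #|[set e.1 | e in E]| + #|[set e.2 | e in E]|)%N.
Proof.
have [k] := ubnP #|E|; elim: k E => // k IH E Ek En Eirr.
have [e0 e0E] := set0Pn _ En.
have [e eE emax] : exists2 e, e \in E & {in E, forall x, (w x <= w e)%O}.
  by case: (arg_maxP w e0E) => e; exists e.
have cardE : #|E| = #|E :\ e|.+1 by rewrite (cardsD1 e E) eE.
have rowsS : [set x.1 | x in E :\ e] \subset [set x.1 | x in E] by rewrite imsetS ?subD1set.
have colsS : [set x.2 | x in E :\ e] \subset [set x.2 | x in E] by rewrite imsetS ?subD1set.
have [E'0|E'n] := eqVneq (E :\ e) set0.
  by rewrite cardE E'0 cards0 (cardsD1 e.1) (cardsD1 e.2) !imset_f //= !add1n addSn ltnS addnS.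
have E'irr : {in E :\ e, forall x, ~~ reducible (E :\ e) x}.
  move=> x /setD1P[_ xE]; apply: contra (Eirr x xE); apply: reducibleS.
  exact: subD1set.
have := IH (E :\ e) _ E'n E'irr; rewrite -ltnS -cardE => /(_ Ek) IHe.
apply: leq_ltn_trans IHe _.
have [row|col] := irreducible_max_isolated eE emax (Eirr e eE).
- by rewrite -addSn leq_add ?subset_leq_card ?(card_imset_setD1_lt (fun x => x.1) eE row).
- by rewrite -addnS leq_add ?subset_leq_card ?(card_imset_setD1_lt (fun x => x.2) eE col).
Qed.

End ReducibleEntries.

Section LocalOptimum.
Context {R : realType} {m n : nat} {P : 'M[R]_(m, n)}.
Hypotheses (P_ge0 : forall i j, 0 <= P i j) (P_opt : local_optimal P).

Lemma local_optimal_irreducible :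
  {in supp P, forall e, ~~ reducible (fun e => P e.1 e.2) (supp P) e}.
Proof.
move=> [i j]; rewrite inE /= => Pij; apply/negP.
case/andP=> /existsP[j' /and3P[j'j ij' le_row]] /existsP[i' /and3P[i'i i'j le_col]].
move: ij' i'j le_row le_col; rewrite !inE /= => ij' i'j le_row le_col.
apply: (P_opt (move2x2 P i i' j j')).
  left; left; exists i, i', j, j'.
  by rewrite !(eq_sym i) !(eq_sym j) i'i j'j ge_max !le_max le_row le_col.
by apply: entropy_move2x2_lt; rewrite // ?lt0r ?ij' ?i'j ?P_ge0 // eq_sym.
Qed.

Lemma card_supp_local_optimal_le : (#|supp P| <= m + n - 1)%N.
Proof.
have [->|En] := eqVneq (supp P) set0; first by rewrite cards0.
have := leq_trans (card_irreducible_lt (fun e => P e.1 e.2) En local_optimal_irreducible)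
  (leq_add (max_card _) (max_card _)).
by rewrite !card_ord => lt_mn; rewrite subn1 -ltnS (ltn_predK lt_mn).
Qed.

End LocalOptimum.

(* A graph on [T] with edge list [s] has at least [#|T| - size s] components. *)
Lemma exists_merging_labeling {T : finType} (s : seq (T * T)) :
  exists g : T -> T, {in s, forall e, g e.1 = g e.2} /\
    (#|T| <= size s + #|[set g x | x : T]|)%N.
Proof.
elim: s => [|[a b] s [g [g_s card_g]]].
  by exists id; split=> //; rewrite card_imset //= cardsT.
pose g' x := if g x == g b then g a else g x.
exists g'; split.
  move=> e /predU1P[-> | es]; first by rewrite /g' eqxx; case: eqP.
  by rewrite /g' (g_s e es).
have g_sub : [set g x | x : T] \subset g b |: [set g' x | x : T].
  apply/subsetP => _ /imsetP[x _ ->]; rewrite in_setU1.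
  have [-> //|gxb] := eqVneq (g x) (g b).
  by apply/orP; right; apply/imsetP; exists x; rewrite // /g' (negbTE gxb).
apply: leq_trans card_g _; rewrite /= addSnnS leq_add2l.
by apply: leq_trans (subset_leq_card g_sub) _; rewrite cardsU1 -add1n leq_add ?leq_b1.
Qed.

Lemma exists_index_labeling {T U : finType} (g : T -> U) :
  exists key : T -> nat, (forall x y, g x = g y -> key x = key y) /\
    forall k, (k < #|[set g x | x : T]|)%N -> exists x, key x = k.
Proof.
set L := enum [set g x | x : T].
exists (fun x => index (g x) L); split=> [x y -> // | k].
rewrite cardE -/L; case def_L: L => [//|u0 L'] k_lt; rewrite -def_L in k_lt *.
have /imsetP[x _ gx] : nth u0 L k \in [set g x | x : T] by rewrite -mem_enum mem_nth.
by exists x; rewrite -gx index_uniq ?enum_uniq.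
Qed.

Lemma take_count_sorted (T : eqType) (leT : rel T) (a : pred T) (s : seq T) :
  transitive leT -> (forall x y, leT x y -> a y -> a x) -> sorted leT s ->
  take (count a s) s = filter a s.
Proof.
move=> leT_tr a_down; elim: s => //= x s IHs x_s.
have x_le := order_path_min leT_tr x_s.
case: ifP => ax; first by rewrite add1n /= IHs ?(path_sorted x_s).
have count0 : count a s = 0%N.
  apply/eqP; rewrite -leqn0 leqNgt -has_count; apply/hasPn => y ys.
  by apply: contraFN ax; apply: a_down; apply: (allP x_le).
by rewrite count0; apply/esym/size0nil; rewrite size_filter.
Qed.

Lemma exists_perm_partial_sums {R : realType} {m} (w : 'I_m -> R) (key : 'I_m -> nat) :
  exists s : 'S_m, forall K, (exists i, (key i < K)%N) -> (exists i, (K <= key i)%N) ->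
    \sum_(i | (key i < K)%N) w i \in partial_sums w s.
Proof.
pose lst := sort (relpre key leq) (enum 'I_m).
have lst_enum : perm_eq lst (enum 'I_m) by rewrite perm_sort.
have lst_sorted : sorted (relpre key leq) lst.
  by apply: sort_sorted => i j; apply: leq_total.
have [s lst_s] : exists s : 'S_m, lst = [tuple tnth (ord_tuple m) (s k) | k < m].
  by apply/tuple_permP; rewrite val_ord_tuple.
exists s => K [i1 lt_i1] [i2 ge_i2].
set N := count (fun i => key i < K)%N lst.
have size_lst : size lst = m by rewrite size_sort size_enum_ord.
have N_le : (N <= m)%N by rewrite -size_lst count_size.
have sumN : \sum_(k < m | (k < N)%N) w (s k) = \sum_(i | (key i < K)%N) w i.
  transitivity (\sum_(k < N) w (nth i1 lst k)).
    rewrite (big_ord_widen _ (fun k => w (nth i1 lst k)) N_le).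
    apply: eq_bigr => k _.
    by rewrite lst_s (nth_map i1) ?size_enum_ord ?nth_ord_enum ?tnth_ord_tuple.
  have take_lst : take N lst = filter (fun i => key i < K)%N lst.
    apply: take_count_sorted lst_sorted => [i j k /= | i j /= ij]; first exact: leq_trans.
    exact: leq_ltn_trans.
  have N_size : (N <= size lst)%N by rewrite size_lst.
  transitivity (\sum_(i <- take N lst) w i).
    rewrite [RHS](big_nth i1) (size_takel N_size) big_mkord.
    by apply: eq_bigr => k _; rewrite nth_take.
  rewrite take_lst big_filter (perm_big _ lst_enum) big_enum_cond.
  by apply: eq_bigl.
have in_lst i : i \in lst by rewrite (perm_mem lst_enum) mem_enum.
have N_gt0 : (0 < N)%N by rewrite -has_count; apply/hasP; exists i1.
have N_lt : (N < m)%N.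
  rewrite -size_lst -(count_predC (fun i => key i < K)%N) -{1}[N]addn0 ltn_add2l.
  by rewrite -has_count; apply/hasP; exists i2; rewrite //= -leqNgt.
apply/mapP; exists N; last by rewrite sumN.
by rewrite mem_iota N_gt0 add1n prednK // (leq_ltn_trans _ N_lt).
Qed.

Lemma uniq_common_partial_sums_lt_kappa {R : realType} {m n} {p : 'I_m -> R} {q : 'I_n -> R}
    (s : 'S_m) (t : 'S_n) (xs : seq R) :
  uniq xs -> {subset xs <= partial_sums p s} -> {subset xs <= partial_sums q t} ->
  (size xs < kappa p q)%N.
Proof.
move=> xs_uniq xs_p xs_q; rewrite /kappa addn1 ltnS.
apply: leq_trans (leq_bigmax s); apply: leq_trans (leq_bigmax t).
apply: uniq_leq_size xs_uniq _ => x xs_x.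
by rewrite mem_undup mem_filter xs_p ?xs_q.
Qed.

Section CouplingComponents.
Context {R : realType} {m n : nat} {p : 'I_m -> R} {q : 'I_n -> R} {P : 'M[R]_(m, n)}.
Hypotheses (p_gt0 : forall i, 0 < p i) (q_gt0 : forall j, 0 < q j).
Hypothesis P_coupling : coupling p q P.
Context {key : 'I_m + 'I_n -> nat} {c : nat}.
Hypothesis key_supp : forall i j, P i j != 0 -> key (inl i) = key (inr j).
Hypothesis key_onto : forall k, (k < c)%N -> exists x, key x = k.

Lemma sum_rows_key (A : pred nat) :
  \sum_(i | A (key (inl i))) p i = \sum_(j | A (key (inr j))) q j.
Proof.
have [_ [rows cols]] := P_coupling.
rewrite big_mkcond [RHS]big_mkcond /=.
transitivity (\sum_i \sum_j if A (key (inl i)) then P i j else 0).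
  by apply: eq_bigr => i _; case: ifP; rewrite ?rows ?big1_eq.
rewrite exchange_big; apply: eq_bigr => j _.
transitivity (\sum_i if A (key (inr j)) then P i j else 0).
  apply: eq_bigr => i _; have [->|nz] := eqVneq (P i j) 0; first by rewrite !if_same.
  by rewrite (key_supp _ _ nz).
by case: ifP; rewrite ?cols ?big1_eq.
Qed.

Lemma key_onto_rows {k} : (k < c)%N -> exists i, key (inl i) = k.
Proof.
have [P_ge0 [rows cols]] := P_coupling.
move=> /key_onto[[i|j] <-]; first by exists i.
have [i /andP[_ Pij]] : exists i, true && (0 < P i j).
  by apply: psumr_neq0P => [i _|]; [exact: P_ge0 | rewrite cols; apply/eqP; rewrite gt_eqF].
by exists i; rewrite (key_supp _ _ (lt0r_neq0 Pij)).
Qed.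

Lemma key_onto_cols {k} : (k < c)%N -> exists j, key (inr j) = k.
Proof.
have [P_ge0 [rows cols]] := P_coupling.
move=> /key_onto[[i|j] <-]; last by exists j.
have [j /andP[_ Pij]] : exists j, true && (0 < P i j).
  by apply: psumr_neq0P => [j _|]; [exact: P_ge0 | rewrite rows; apply/eqP; rewrite gt_eqF].
by exists j; rewrite (key_supp _ _ (lt0r_neq0 Pij)).
Qed.

Definition mass_below K := \sum_(i | (key (inl i) < K)%N) p i.

Lemma mass_below_lt {K1 K2} : (K1 < K2)%N -> (K1 < c)%N -> mass_below K1 < mass_below K2.
Proof.
move=> K12 K1c; have [i1 key_i1] := key_onto_rows K1c.
rewrite [X in _ < X]/mass_below [X in _ < X](bigID (fun i => key (inl i) < K1)%N) /=.
have -> : \sum_(i | (key (inl i) < K2)%N && (key (inl i) < K1)%N) p i = mass_below K1.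
  by apply: eq_bigl => i; rewrite andb_idl // => lt1; apply: ltn_trans lt1 K12.
rewrite ltrDl (bigD1 i1) /= ?key_i1 ?K12 ?ltnn //.
by rewrite ltr_wpDr ?sumr_ge0 // => i _; apply: ltW.
Qed.

Lemma onto_key_le_kappa : (c <= kappa p q)%N.
Proof.
have [s mass_s] := exists_perm_partial_sums p (fun i => key (inl i)).
have [t mass_t] := exists_perm_partial_sums q (fun j => key (inr j)).
have K_lt K : K \in iota 1 c.-1 -> (0 < K < c)%N.
  by rewrite mem_iota; lia.
apply: leq_trans (leqSpred c) _.
rewrite -(size_iota 1 c.-1) -(size_map mass_below).
apply: (uniq_common_partial_sums_lt_kappa s t).
- rewrite map_inj_in_uniq ?iota_uniq // => K1 K2 /K_lt/andP[_ K1c] /K_lt/andP[_ K2c] eqK.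
  have [lt12|lt21|//] := ltngtP K1 K2.
  + by have := mass_below_lt lt12 K1c; rewrite eqK ltxx.
  + by have := mass_below_lt lt21 K2c; rewrite eqK ltxx.
- move=> _ /mapP[K /K_lt/andP[K0 Kc] ->]; apply: mass_s.
  + by have [i key_i] := key_onto_rows (leq_ltn_trans (leq0n _) Kc); exists i; rewrite key_i.
  + by have [i key_i] := key_onto_rows Kc; exists i; rewrite key_i.
- move=> _ /mapP[K /K_lt/andP[K0 Kc] ->]; rewrite /mass_below (sum_rows_key (fun k => k < K)%N).
  apply: mass_t.
  + by have [j key_j] := key_onto_cols (leq_ltn_trans (leq0n _) Kc); exists j; rewrite key_j.
  + by have [j key_j] := key_onto_cols Kc; exists j; rewrite key_j.
Qed.

End CouplingComponents.

Lemma card_supp_coupling_ge (R : realType) m n (p : 'I_m -> R) (q : 'I_n -> R)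
    (P : 'M[R]_(m, n)) :
  (forall i, 0 < p i) -> (forall j, 0 < q j) -> coupling p q P ->
  (m + n - kappa p q <= #|supp P|)%N.
Proof.
move=> p_gt0 q_gt0 P_coupling.
pose edges : seq (('I_m + 'I_n) * ('I_m + 'I_n)) :=
  [seq (inl e.1, inr e.2) | e <- enum (supp P)].
have [g [g_edges card_g]] := exists_merging_labeling edges.
have [key [key_g key_onto]] := exists_index_labeling g.
have key_supp i j : P i j != 0 -> key (inl i) = key (inr j).
  move=> Pij; apply/key_g/(g_edges (inl i, inr j))/mapP.
  by exists (i, j); rewrite // mem_enum inE.
rewrite size_map -cardE card_sum !card_ord in card_g.
rewrite leq_subLR [(kappa _ _ + _)%N]addnC; apply: leq_trans card_g _; rewrite leq_add2l.
exact: (onto_key_le_kappa p_gt0 q_gt0 P_coupling key_supp key_onto).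
Qed.

Theorem theorem2p2 (R : realType) (m n : nat) (p : 'I_m -> R) (q : 'I_n -> R)
  (P : 'M[R]_(m, n)) :
  (2 <= m)%N -> (2 <= n)%N ->
  pos_prob_vec p -> pos_prob_vec q ->
  coupling p q P -> local_optimal P ->
  (m + n - kappa p q <= #|supp P| <= m + n - 1)%N.
Proof.
move=> _ _ [p_gt0 _] [q_gt0 _] P_coupling P_opt.
rewrite card_supp_coupling_ge //=.
exact: card_supp_local_optimal_le P_coupling.1 P_opt.
Qed.
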